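(* Let $q\in\mathbb{C}^\times$ be not a root of unity. The map $\mathbf{u}^{\langle0\rangle}:\mathbb{C}[x]^{\langle0\rangle}\to\mathbb{C}^\times\times\prod_{t>0}\mathbb{C}$ is injective.
   Context: $[k]=(q^k-q^{-k})/(q-q^{-1})$. $p_t(q)(x_1,\dots,x_k)=\sum_{\lambda\vdash t,\ell(\lambda)\le k}q^{-\ell(\lambda)}(q-q^{-1})^{\ell(\lambda)-1}m_\lambda(x_1,\dots,x_k)$ ($m_\lambda$ the monomial symmetric polynomial, $\ell(\lambda)$ the number of nonzero parts). $\mathbb{C}[x]^{\langle0\rangle}$ is the set of polynomials $\varphi=\beta_\varphi(x-\gamma_1)\cdots(x-\gamma_k)\in\mathbb{C}[x]$ whose leading coefficient $\beta_\varphi$ equals $\pm1$, and $\mathbf{u}^{\langle0\rangle}(\varphi)=(\beta_\varphi,(0)_{t>0})$ if $k=0$, $(\beta_\varphi q^k,(p_t(q)(\gamma_1,\dots,\gamma_k))_{t>0})$ if $k>0$. *)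

From HB Require Import structures.
From mathcomp Require Import all_boot all_order all_algebra.
From mathcomp Require Import Rstruct complex.
Set Implicit Arguments. Unset Strict Implicit. Unset Printing Implicit Defensive.
Import Order.TTheory GRing.Theory Num.Theory.
Local Open Scope ring_scope.

Definition C : numClosedFieldType := complex Rdefinitions.R.

Definition vals (k t : nat) (a : {ffun 'I_k -> 'I_t.+1}) : seq nat :=
  [seq (a i : nat) | i <- enum 'I_k].

(* lam (a function 'I_k -> 'I_t.+1, i.e. a k-vector of naturals <= t) encodes
   a partition of t with at most k nonzero parts: its entries are
   nonincreasing (the parts, padded with zeros) and sum to t. *)
Definition is_partition (k t : nat) (lam : {ffun 'I_k -> 'I_t.+1}) : bool :=
  sorted geq (vals lam) && (sumn (vals lam) == t).

Definition plength (k t : nat) (lam : {ffun 'I_k -> 'I_t.+1}) : nat :=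
  count (fun n => n != 0%N) (vals lam).

Definition monsym (F : comNzRingType) (k t : nat)
    (lam : {ffun 'I_k -> 'I_t.+1}) (x : 'I_k -> F) : F :=
  \sum_(alpha : {ffun 'I_k -> 'I_t.+1} | perm_eq (vals alpha) (vals lam))
     \prod_(i < k) x i ^+ (alpha i : nat).

Definition p_q (t : nat) (q : C) (k : nat) (x : 'I_k -> C) : C :=
  \sum_(lam : {ffun 'I_k -> 'I_t.+1} | is_partition lam)
     q ^- plength lam * (q - q^-1) ^+ (plength lam).-1 * monsym lam x.

(* the roots gamma_1..gamma_k (with multiplicity) of phi :
   phi = lead_coef phi * (x - gamma_1) ... (x - gamma_k) *)
Definition roots_of (phi : {poly C}) : seq C :=
  proj1_sig (closed_field_poly_normal phi).

Definition in_Cx0 (phi : {poly C}) : Prop :=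
  lead_coef phi = 1 \/ lead_coef phi = -1.

(* u^<0>(phi), as a pair (first component, sequence indexed by t);
   only the entries t > 0 are meaningful (entry t = 0 is set to 0). *)
Definition u0 (q : C) (phi : {poly C}) : C * (nat -> C) :=
  let s := roots_of phi in
  let k := size s in
  if k == 0%N then (lead_coef phi, fun _ => 0)
  else (lead_coef phi * q ^+ k,
        fun t => if t == 0%N then 0
                 else p_q t q (fun i : 'I_k => nth 0 s i)).

(* Put r := q^-2 and A_phi := prod_i (1 - g_i X) over the roots g_i of phi.
   Since (1 - r g X) / (1 - g X) = 1 + (1 - r) sum_(n >= 1) g^n X^n, regrouping
   monomials by the partition they rearrange shows that (q - q^-1) p_t(q)(g) is the
   coefficient of X^t in A_phi(r X) / A_phi(X).  Hence u^<0>(phi) = u^<0>(psi)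
   forces A_phi(X) A_psi(r X) = A_psi(X) A_phi(r X).  Once the gcd is cancelled, a
   factor P with P(0) <> 0 divides P(r X), which has the same degree and
   constant term, so P(r X) = P(X) and P is constant because r is not a root of unity; thus
   A_phi = A_psi.  The first component +-q^k fixes the degree k and the sign, and
   A_phi together with k fixes the roots. *)
From mathcomp Require Import all_boot all_order all_algebra.
From mathcomp Require Import Rstruct complex.
From mathcomp Require Import ring.
Set Implicit Arguments. Unset Strict Implicit. Unset Printing Implicit Defensive.
Import Order.TTheory GRing.Theory Num.Theory.
Local Open Scope ring_scope.

Section Truncation.
Variable R : nzSemiRingType.
Implicit Types p : {poly R}.

Lemma take_polyM n p1 p2 :
  take_poly n (p1 * p2) = take_poly n (take_poly n p1 * take_poly n p2).
Proof.
apply/polyP => i; rewrite !coef_take_poly; case: ltnP => // lt_in.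
rewrite !coefM; apply: eq_bigr => j _; rewrite !coef_take_poly.
have lt_jn : (j < n)%N by apply: leq_ltn_trans lt_in; rewrite -ltnS.
by rewrite lt_jn (leq_ltn_trans (leq_subr _ _) lt_in).
Qed.

Lemma take_polyMr n p q1 q2 : take_poly n q1 = take_poly n q2 ->
  take_poly n (p * q1) = take_poly n (p * q2).
Proof. by move=> eq12; rewrite take_polyM eq12 -take_polyM. Qed.

Lemma take_poly_prod n (I : Type) (r : seq I) (f g : I -> {poly R}) :
  (forall i, take_poly n (f i) = take_poly n (g i)) ->
  take_poly n (\prod_(i <- r) f i) = take_poly n (\prod_(i <- r) g i).
Proof.
move=> efg; elim: r => [|i r IHr]; first by rewrite !big_nil.
by rewrite !big_cons take_polyM IHr efg -take_polyM.
Qed.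

Lemma take_poly_poly n m (f : nat -> R) : (n <= m)%N ->
  take_poly n (\poly_(i < m) f i) = \poly_(i < n) f i.
Proof.
move=> le_nm; apply/polyP => i; rewrite coef_take_poly !coef_poly.
by case: ltnP => // lt_in; rewrite (leq_trans lt_in le_nm).
Qed.

End Truncation.

Lemma coef_prod_poly (R : comNzRingType) k m (f : 'I_k -> nat -> R) j :
  (\prod_(i < k) \poly_(n < m) f i n)`_j =
  \sum_(a : {ffun 'I_k -> 'I_m} | (\sum_(i < k) a i == j)%N) \prod_(i < k) f i (a i).
Proof.
under eq_bigr do rewrite poly_def.
rewrite bigA_distr_bigA coef_sum [RHS]big_mkcond; apply: eq_bigr => a _.
rewrite scaler_prod prodrXr coefZ coefXn eq_sym.
by case: eqP; rewrite ?mulr1 ?mulr0.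
Qed.

Section Dilation.
Variables (F : fieldType) (r : F).
Hypotheses (r_neq0 : r != 0) (r_nonroot : forall j, (0 < j)%N -> r ^+ j != 1).
Implicit Types p P Q : {poly F}.

Local Notation dilate p := (p \Po (r *: 'X)).

Lemma coef_dilate p j : (dilate p)`_j = r ^+ j * p`_j.
Proof.
have -> : dilate p = \poly_(i < size p) (r ^+ i * p`_i).
  by rewrite comp_polyE poly_def; apply: eq_bigr => i _; rewrite exprZn scalerA mulrC.
by rewrite coef_poly; case: ltnP => // le_pj; rewrite nth_default ?mulr0.
Qed.

Lemma size_dilate p : size (dilate p) = size p.
Proof. by rewrite size_comp_poly2 // size_scale // size_polyX. Qed.

Lemma eqp_dilate_const p : p`_0 != 0 -> p %= dilate p -> p = (p`_0)%:P.
Proof.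
move=> p0_neq0 /eqpf_eq[c _ def_p].
have c1 : c = 1.
  have := congr1 (coefp 0) def_p; rewrite /= coefZ coef_dilate expr0 mul1r.
  by move=> e; apply: (mulIf p0_neq0); rewrite mul1r -e.
apply/polyP => -[|j]; rewrite coefC //=.
have := congr1 (coefp j.+1) def_p; rewrite /= c1 scale1r coef_dilate => e.
apply/eqP; move: (r_nonroot (ltn0Sn j)); apply: contraNT => pj_neq0.
by apply/eqP/(mulIf pj_neq0); rewrite mul1r -e.
Qed.

Lemma coprime_dilate_const P Q :
  coprimep P Q -> P * dilate Q = Q * dilate P -> P`_0 != 0 -> P = (P`_0)%:P.
Proof.
move=> cPQ ePQ P0_neq0; apply: eqp_dilate_const => //.
have dvdP : P %| dilate P by rewrite -(Gauss_dvdpr _ cPQ) -ePQ dvdp_mulr.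
by rewrite -dvdp_size_eqp // size_dilate.
Qed.

Lemma dilate_commute_eq P Q :
  P`_0 = Q`_0 -> P`_0 != 0 -> P * dilate Q = Q * dilate P -> P = Q.
Proof.
move=> eP0Q0 P0_neq0 ePQ.
have P_neq0 : P != 0 by apply: contraNneq P0_neq0 => ->; rewrite coef0.
set g := gcdp P Q.
have g_neq0 : g != 0 by rewrite gcdp_eq0 negb_and P_neq0.
have defP : P = P %/ g * g by rewrite divpK // dvdp_gcdl.
have defQ : Q = Q %/ g * g by rewrite divpK // dvdp_gcdr.
set P1 := P %/ g in defP *; set Q1 := Q %/ g in defQ *.
have cP1Q1 : coprimep P1 Q1 by apply: coprimep_div_gcd; rewrite P_neq0.
have eP1Q1 : P1 * dilate Q1 = Q1 * dilate P1.
  have dg_neq0 : dilate g != 0 by rewrite -size_poly_eq0 size_dilate size_poly_eq0.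
  apply: (mulIf (mulf_neq0 g_neq0 dg_neq0)).
  by rewrite mulrACA [RHS]mulrACA -!comp_polyM -defP -defQ.
have P0E : P`_0 = P1`_0 * g`_0 by rewrite {1}defP coef0M.
have Q0E : Q`_0 = Q1`_0 * g`_0 by rewrite {1}defQ coef0M.
have /norP[P10_neq0 g0_neq0] : ~~ ((P1`_0 == 0) || (g`_0 == 0)).
  by rewrite -mulf_eq0 -P0E.
have eP10Q10 : P1`_0 = Q1`_0 by apply: (mulIf g0_neq0); rewrite -P0E -Q0E.
have Q10_neq0 : Q1`_0 != 0 by rewrite -eP10Q10.
have cQ1P1 : coprimep Q1 P1 by rewrite coprimep_sym.
rewrite defP defQ (coprime_dilate_const cP1Q1 eP1Q1) //.
by rewrite (coprime_dilate_const cQ1P1 (esym eP1Q1)) // eP10Q10.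
Qed.

End Dilation.

Section GeneratingPolynomials.
Variable F : fieldType.
Implicit Types (r x : F) (s : seq F).

Definition recip_prod s : {poly F} := \prod_(x <- s) (1 - x *: 'X).

Lemma coef0_recip_prod s : (recip_prod s)`_0 = 1.
Proof.
by rewrite coef0_prod big1_seq // => x _; rewrite coefB coef1 coefZ coefX mulr0 subr0.
Qed.

Lemma coef_recip_prod s j :
  (recip_prod s)`_j =
    if (j <= size s)%N then (\prod_(x <- s) ('X - x%:P))`_(size s - j) else 0.
Proof.
elim: s j => [|x s IHs] j.
  by rewrite /recip_prod !big_nil !coef1; case: j.
rewrite /recip_prod !big_cons -/(recip_prod s) /=.
rewrite mulrBl mul1r -scalerAl coefB coefZ coefXM mulrBl coefB coefXM coefCM.
have size_s : size (\prod_(y <- s) ('X - y%:P)) = (size s).+1 by rewrite size_prod_XsubC.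
case: j => [|j] /=.
  rewrite IHs leq0n subn0 /= mulr0 subr0 subSn //= subn0.
  by rewrite (nth_default 0 (_ : size _ <= (size s).+1)%N) ?size_s // mulr0 subr0.
rewrite !IHs ltnS subSS.
case: (ltngtP j (size s)) => [lt_js|lt_sj|->].
- rewrite subnS (_ : (size s - j == 0)%N = false) //.
  by apply/negbTE; rewrite subn_eq0 -ltnNge.
- by rewrite mulr0 subr0.
- by rewrite subnn /= sub0r.
Qed.

Lemma recip_prod_inj s1 s2 : size s1 = size s2 -> recip_prod s1 = recip_prod s2 ->
  \prod_(x <- s1) ('X - x%:P) = \prod_(x <- s2) ('X - x%:P).
Proof.
move=> es eA; apply/polyP => i.
have [le_is1|lt_s1i] := leqP i (size s1).
  have := coef_recip_prod s1 (size s1 - i); rewrite eA coef_recip_prod -es leq_subr.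
  by rewrite subKn // => ->.
by rewrite !nth_default // size_prod_XsubC // -es.
Qed.

(* gen_poly r m s truncates prod_(x <- s) (1 - r x X) / (1 - x X) at degree m. *)
Definition gen_coef r n x : F := if n is 0 then 1 else (1 - r) * x ^+ n.

Definition gen_poly r m s : {poly F} := \prod_(x <- s) \poly_(n < m.+1) gen_coef r n x.

Lemma prod_gen_coef r k t (a : {ffun 'I_k -> 'I_t.+1}) (g : 'I_k -> F) :
  \prod_(i < k) gen_coef r (a i) (g i) =
  (1 - r) ^+ plength a * \prod_(i < k) g i ^+ a i.
Proof.
have -> : plength a = (\sum_(i < k) ((a i : nat) != 0%N))%N.
  by rewrite /plength /vals count_map -sum1_count big_mkcond big_enum.
rewrite -prodrXr -big_split; apply: eq_bigr => i _.
by case: (a i : nat) => [|n]; rewrite /= ?expr0 ?mul1r ?expr1.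
Qed.

Lemma coef0_gen_poly r s : (gen_poly r 0 s)`_0 = 1.
Proof. by rewrite coef0_prod big1_seq // => x _; rewrite coef_poly. Qed.

Lemma take_gen_poly r m s :
  take_poly m.+1 (gen_poly r m s) = \poly_(t < m.+1) (gen_poly r t s)`_t.
Proof.
apply/polyP => t; rewrite coef_take_poly coef_poly; case: ltnP => // lt_tm.
have e : take_poly t.+1 (gen_poly r m s) = take_poly t.+1 (gen_poly r t s).
  by apply: take_poly_prod => x; rewrite !take_poly_poly.
by have := congr1 (coefp t) e; rewrite /= !coef_take_poly ltnSn.
Qed.

Lemma take_recip_prod_gen_poly r m s :
  take_poly m.+1 (recip_prod s * gen_poly r m s) =
  take_poly m.+1 (recip_prod s \Po (r *: 'X)).
Proof.
rewrite /recip_prod /gen_poly -big_split rmorph_prod /=; apply: take_poly_prod => x.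
apply/polyP => i; rewrite !coef_take_poly; case: ltnP => // lt_im.
rewrite comp_polyB comp_polyC comp_polyZ comp_polyX scalerA.
rewrite mulrBl mul1r -scalerAl coefB coefZ coefXM !coef_poly lt_im.
rewrite coefB coef1 coefZ coefX.
case: i lt_im => [|[|i]] lt_im /=.
- by ring.
- by rewrite expr1; ring.
- by rewrite (ltn_trans _ lt_im) // exprS; ring.
Qed.

Lemma recip_prod_dilate_commute r s1 s2 :
  (forall t, (0 < t)%N -> (gen_poly r t s1)`_t = (gen_poly r t s2)`_t) ->
  recip_prod s1 * (recip_prod s2 \Po (r *: 'X)) =
  recip_prod s2 * (recip_prod s1 \Po (r *: 'X)).
Proof.
move=> eG; set A1 := recip_prod s1; set A2 := recip_prod s2.
have eT m : take_poly m.+1 (gen_poly r m s1) = take_poly m.+1 (gen_poly r m s2).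
  by rewrite !take_gen_poly; apply: eq_poly => -[|t] _; rewrite ?coef0_gen_poly ?eG.
have eTm m : take_poly m.+1 (A1 * (A2 \Po (r *: 'X))) =
             take_poly m.+1 (A2 * (A1 \Po (r *: 'X))).
  rewrite (take_polyMr _ (esym (take_recip_prod_gen_poly _ _ _))) mulrCA.
  rewrite -(take_polyMr _ (take_recip_prod_gen_poly _ _ _)).
  by do 2 apply: take_polyMr.
by apply/polyP => m; have := congr1 (coefp m) (eTm m); rewrite /= !coef_take_poly ltnSn.
Qed.

End GeneratingPolynomials.

Section Partitions.
Variables k t : nat.
Implicit Types a lam : {ffun 'I_k -> 'I_t.+1}.

Lemma sumn_vals a : sumn (vals a) = (\sum_(i < k) a i)%N.
Proof. by rewrite /vals sumnE big_map big_enum. Qed.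

Lemma vals_inj : injective (@vals k t).
Proof.
move=> a b eab; apply/ffunP => i; apply: val_inj.
by move/eq_in_map: eab; apply; rewrite mem_enum.
Qed.

Lemma vals_fgraph a : vals a = map val (fgraph a).
Proof. by rewrite -codom_ffun -map_comp. Qed.

Definition sort_parts a : {ffun 'I_k -> 'I_t.+1} :=
  Finfun (sort_tuple (relpre val geq) (fgraph a)).

Lemma vals_sort_parts a : vals (sort_parts a) = sort geq (vals a).
Proof. by rewrite !vals_fgraph FinfunK sort_map. Qed.

Lemma sort_parts_partition a : sumn (vals a) = t -> is_partition (sort_parts a).
Proof.
move=> sum_a; rewrite /is_partition vals_sort_parts (sort_sorted ge_total).
by rewrite (perm_sumn (permEl (perm_sort _ _))) sum_a /=.
Qed.

Lemma sort_parts_unique a lam :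
  is_partition lam -> perm_eq (vals a) (vals lam) -> lam = sort_parts a.
Proof.
case/andP=> sorted_lam _ perm_a; apply: vals_inj; rewrite vals_sort_parts.
apply: (sorted_eq ge_trans ge_anti) => //; first by apply: sort_sorted; exact: ge_total.
by rewrite perm_sym perm_sort.
Qed.

Lemma sum_partitions (V : nmodType) (G : {ffun 'I_k -> 'I_t.+1} -> V) :
  \sum_(lam : {ffun 'I_k -> 'I_t.+1} | is_partition lam)
    \sum_(a : {ffun 'I_k -> 'I_t.+1} | perm_eq (vals a) (vals lam)) G a =
  \sum_(a : {ffun 'I_k -> 'I_t.+1} | sumn (vals a) == t) G a.
Proof.
rewrite (exchange_big_dep (fun a => sumn (vals a) == t)) /=; last first.
  by move=> lam a /andP[_ /eqP sum_lam] perm_a; rewrite (perm_sumn perm_a) sum_lam.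
apply: eq_bigr => a /eqP sum_a; rewrite (big_pred1 (sort_parts a)) // => lam /=.
apply/andP/eqP => [[lam_part perm_a]|->]; first exact: sort_parts_unique.
by rewrite sort_parts_partition // vals_sort_parts perm_sym perm_sort.
Qed.

Lemma plength_gt0 lam : is_partition lam -> (0 < t)%N -> (0 < plength lam)%N.
Proof.
case/andP=> _ /eqP sum_lam t_gt0; rewrite /plength -has_count.
have : (0 < sumn (vals lam))%N by rewrite sum_lam.
by elim: (vals lam) => //= -[|n] s IHs; rewrite ?add0n.
Qed.

Lemma plength_perm a lam : perm_eq (vals a) (vals lam) -> plength a = plength lam.
Proof. by move/permP; apply. Qed.

End Partitions.

Lemma p_q_gen_poly (q : C) t (s : seq C) : q != 0 -> (0 < t)%N ->
  (q - q^-1) * p_q t q (fun i : 'I_(size s) => s`_i) = (gen_poly (q ^- 2) t s)`_t.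
Proof.
move=> q_neq0 t_gt0; rewrite /gen_poly (big_nth 0) big_mkord coef_prod_poly.
under [RHS]eq_bigl do rewrite -sumn_vals.
rewrite -sum_partitions /p_q mulr_sumr; apply: eq_bigr => lam lam_part.
have [l lam_l] : exists l, plength lam = l.+1.
  by exists (plength lam).-1; rewrite prednK // plength_gt0.
rewrite /monsym !mulr_sumr; apply: eq_bigr => a perm_a.
have w_def : 1 - q ^- 2 = (q - q^-1) / q by field.
rewrite prod_gen_coef (plength_perm perm_a) lam_l w_def expr_div_n.
by rewrite [(q - q^-1) ^+ l.+1]exprS /=; ring.
Qed.

Lemma u0_fst q phi : (u0 q phi).1 = lead_coef phi * q ^+ size (roots_of phi).
Proof. by rewrite /u0; case: eqP => //= ->; rewrite mulr1. Qed.

Lemma u0_snd q phi t : (0 < t)%N ->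
  (u0 q phi).2 t = p_q t q (fun i : 'I_(size (roots_of phi)) => (roots_of phi)`_i).
Proof.
move=> t_gt0; rewrite /u0; case: eqP => [size0|_] /=; last by rewrite (gtn_eqF t_gt0).
rewrite /p_q big_pred0 // => lam; apply/negbTE/nandP; right.
suff -> : vals lam = [::] by rewrite eq_sym -lt0n.
by apply/nilP; rewrite /nilp size_map size_enum_ord size0.
Qed.

Section NonRootOfUnity.
Variables (F : fieldType) (q : F).
Hypotheses (q_neq0 : q != 0) (q_nonroot : forall n, (0 < n)%N -> q ^+ n != 1).

Lemma expr_nonroot_inj : injective (fun n => q ^+ n).
Proof.
suff le_inj m n : (m <= n)%N -> q ^+ m = q ^+ n -> m = n.
  by move=> m n e; case: (leqP m n) => [|/ltnW] le; [exact: le_inj | exact/esym/le_inj].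
move=> le_mn e; apply/eqP; rewrite eqn_leq le_mn /= leqNgt; apply/negP => lt_mn.
have /eqP : q ^+ (n - m) = 1.
  by apply: (mulfI (expf_neq0 m q_neq0)); rewrite -exprD subnKC // mulr1 e.
by apply/negP; rewrite q_nonroot // subn_gt0.
Qed.

Lemma sign_expr_nonroot_inj (e1 e2 : F) m n : e1 ^+ 2 = 1 -> e2 ^+ 2 = 1 ->
  e1 * q ^+ m = e2 * q ^+ n -> m = n.
Proof.
move=> e1_sq e2_sq e; have := congr1 (fun x => x ^+ 2) e.
rewrite /= !exprMn e1_sq e2_sq !mul1r -!exprM => /expr_nonroot_inj/eqP.
by rewrite eqn_pmul2r // => /eqP.
Qed.

Lemma sqrV_nonroot j : (0 < j)%N -> (q ^- 2) ^+ j != 1.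
Proof. by move=> j_gt0; rewrite exprVn invr_eq1 -exprM q_nonroot // muln_gt0. Qed.

End NonRootOfUnity.

Lemma lead_coef_sqr phi : in_Cx0 phi -> lead_coef phi ^+ 2 = 1.
Proof. by case=> ->; rewrite ?sqrrN expr1n. Qed.

Lemma prod_roots_of phi :
  phi = lead_coef phi *: \prod_(x <- roots_of phi) ('X - x%:P).
Proof. exact: (proj2_sig (closed_field_poly_normal phi)). Qed.

Unset Implicit Arguments.

Theorem mainTheorem15 (q : C) (hq0 : q != 0)
    (hq : forall n : nat, (0 < n)%N -> q ^+ n != 1)
    (phi1 phi2 : {poly C}) :
  in_Cx0 phi1 -> in_Cx0 phi2 ->
  u0 q phi1 = u0 q phi2 -> phi1 = phi2.
Proof.
move=> Cx_phi1 Cx_phi2 eu.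
set s1 := roots_of phi1; set s2 := roots_of phi2.
have e1 := congr1 fst eu; rewrite !u0_fst in e1.
have es : size s1 = size s2.
  by apply: (sign_expr_nonroot_inj hq0 hq) e1; apply: lead_coef_sqr.
have el : lead_coef phi1 = lead_coef phi2.
  by apply: (mulIf (expf_neq0 (size s1) hq0)); rewrite e1 es.
have eA : recip_prod s1 = recip_prod s2.
  apply: (dilate_commute_eq (r := q ^- 2)); rewrite ?coef0_recip_prod ?oner_eq0 //.
  - by rewrite invr_eq0 expf_neq0.
  - exact: sqrV_nonroot.
  apply: recip_prod_dilate_commute => t t_gt0.
  rewrite -!p_q_gen_poly //; congr (_ * _).
  by have := congr1 (fun u => u.2 t) eu; rewrite /= !u0_snd.
by rewrite [phi1]prod_roots_of [phi2]prod_roots_of el (recip_prod_inj es eA).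
Qed.
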